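(* Let $K$ be the $2$-uniform tiling of the plane whose vertex types are $[3^6]$ and $[3^2,4^1,3^1,4^1]$. If $X$ is a map on the torus that is a quotient $X=K/\Gamma$ of $K$, then the vertices of $X$ form at most $4$ orbits under ${\rm Aut}(X)$.
   Context: A map is a polyhedral map: a cellular embedding of a connected graph in a closed surface such that the intersection of any two distinct faces is empty, a single vertex, or a single edge. For a vertex $u$, the faces containing $u$ form a cyclic sequence (the face-cycle at $u$); if this cyclic sequence consists of consecutive blocks of $n_1$ $p_1$-gons, then $n_2$ $p_2$-gons, ..., then $n_k$ $p_k$-gons, with cyclically consecutive $p_i$ distinct, then $u$ is said to have type $[p_1^{n_1},\dots,p_k^{n_k}]$ (defined up to cyclic shift and reversal). A $2$-uniform tiling is an edge-to-edge tiling of the Euclidean plane $\mathbb{R}^2$ by regular polygons whose symmetry group has exactly two orbits on the set of vertices; viewed as a map on the plane, its vertices have (at most) two types, listed as $[W;Z]$. (Up to isomorphism there are exactly $20$ such tilings; there is exactly one with the vertex types named in the claim.) For a map $K$ on the plane, a quotient of $K$ on the torus is a map $X$ on the torus together with a polyhedral covering map $\eta:K\to X$ with $X=K/\Gamma$, where $\Gamma\le {\rm Aut}(K)$ is a subgroup acting without fixed vertices, edges or faces and $K/\Gamma$ is homeomorphic to the torus. ${\rm Aut}(X)$ denotes the automorphism group of the map $X$, acting on its vertex set $V(X)$. *)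

From Stdlib Require Import ZArith List.
Import ListNotations.
Open Scope Z_scope.

Inductive six := S0 | S1 | S2 | S3 | S4 | S5.

Definition nxt (k : six) : six :=
  match k with S0 => S1 | S1 => S2 | S2 => S3 | S3 => S4 | S4 => S5 | S5 => S0 end.
Definition prv (k : six) : six :=
  match k with S0 => S5 | S1 => S0 | S2 => S1 | S3 => S2 | S4 => S3 | S5 => S4 end.

(* Neighbour vectors of the triangular lattice Z^2 (basis at 60 degrees):
   direction j points at angle 60*j degrees. *)
Definition dv (j : six) : Z * Z :=
  match j with
  | S0 => (1, 0) | S1 => (0, 1) | S2 => (-1, 1)
  | S3 => (-1, 0) | S4 => (0, -1) | S5 => (1, -1)
  end.

(* Geometric picture: K is the rhombitrihexagonal tiling 3.4.6.4 with every
   hexagon subdivided into 6 triangles.  Hexagons are centred at the points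
   (m,n) of the triangular lattice.
   Cen m n   = centre of hexagon (m,n)            (type [3^6])
   Bdy m n k = corner of hexagon (m,n) at angle 30+60k degrees
                                                   (type [3^2,4,3,4]) *)
Inductive KV := Cen (m n : Z) | Bdy (m n : Z) (k : six).

Definition bdv (m n : Z) (j k : six) : KV :=
  Bdy (m + fst (dv j)) (n + snd (dv j)) k.

(* Face labels (squares are listed twice, once from each adjacent hexagon,
   which is harmless since faces are only used up to cyclic rotation). *)
Inductive KF :=
| Tri (m n : Z) (k : six)   (* triangle of the subdivided hexagon *)
| Sqr (m n : Z) (j : six)   (* square on edge j of hexagon (m,n) *)
| Up (m n : Z)              (* triangle between hexagons h, h+d0, h+d1 *)
| Dn (m n : Z).             (* triangle between hexagons h, h+d1, h+d2 *)

(* Boundary cycles, all oriented counterclockwise. *)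
Definition bd (f : KF) : list KV :=
  match f with
  | Tri m n k => [Cen m n; Bdy m n k; Bdy m n (nxt k)]
  | Sqr m n j => [Bdy m n j; Bdy m n (prv j);
                  bdv m n j (nxt (nxt (nxt j))); bdv m n j (nxt (nxt j))]
  | Up m n => [Bdy m n S0; Bdy (m + 1) n S2; Bdy m (n + 1) S4]
  | Dn m n => [Bdy m n S1; Bdy m (n + 1) S3; Bdy (m - 1) (n + 1) S5]
  end.

Definition rot {A : Type} (n : nat) (l : list A) : list A :=
  skipn n l ++ firstn n l.

Definition KFace (l : list KV) : Prop := exists f n, l = rot n (bd f).

Definition KEdge (u v : KV) : Prop := exists t, KFace (u :: v :: t).

Definition face_pres (s : KV -> KV) : Prop :=
  forall l, KFace l -> KFace (map s l) \/ KFace (rev (map s l)).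

Definition is_autK (s : KV -> KV) : Prop :=
  exists t, (forall x, t (s x) = x) /\ (forall x, s (t x) = x)
            /\ face_pres s /\ face_pres t.

Definition subgroup_autK (G : (KV -> KV) -> Prop) : Prop :=
  (forall g, G g -> is_autK g)
  /\ (exists e, G e /\ forall x, e x = x)
  /\ (forall g h, G g -> G h -> exists k, G k /\ forall x, k x = g (h x))
  /\ (forall g, G g -> exists h, G h /\ forall x, h (g x) = x /\ g (h x) = x).

Definition acts_freely (G : (KV -> KV) -> Prop) : Prop :=
  forall g, G g ->
    ((exists v, g v = v)
     \/ (exists u v, KEdge u v /\ g u = v /\ g v = u)
     \/ (exists l, KFace l /\ forall x, In x (map g l) <-> In x l)) ->
    forall x, g x = x.

(* K/G is homeomorphic to the torus: it is compact (finitely many vertex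
   orbits) and orientable (G preserves the orientation of K). *)
Definition quotient_is_torus (G : (KV -> KV) -> Prop) : Prop :=
  (exists reps : list KV, forall u, exists r g, In r reps /\ G g /\ g r = u)
  /\ (forall g, G g -> forall l, KFace l -> KFace (map g l)).

(* vertices of X = K/G : G-orbits *)
Definition eqv (G : (KV -> KV) -> Prop) (u v : KV) : Prop :=
  exists g, G g /\ g u = v.

Definition inX (G : (KV -> KV) -> Prop) (l : list KV) (x : KV) : Prop :=
  exists y, In y l /\ eqv G y x.

Definition adj (l : list KV) (u v : KV) : Prop :=
  exists n t, rot n l = u :: v :: t.

Definition edgeX_on (G : (KV -> KV) -> Prop) (l : list KV) (a b : KV) : Prop :=
  exists u v, (adj l u v \/ adj l v u) /\ eqv G u a /\ eqv G v b.

Definition sameXFace (G : (KV -> KV) -> Prop) (l1 l2 : list KV) : Prop :=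
  exists g, G g /\ forall x, In x (map g l1) <-> In x l2.

(* X = K/G is a polyhedral map: faces are cycles (no repeated vertices),
   the graph is simple, and two distinct faces meet in nothing, a vertex
   or an edge. *)
Definition polyhedral_quotient (G : (KV -> KV) -> Prop) : Prop :=
  (forall l, KFace l -> forall i j u v, i <> j ->
       nth_error l i = Some u -> nth_error l j = Some v -> ~ eqv G u v)
  /\ (forall u v u' v', KEdge u v -> KEdge u' v' -> eqv G u u' -> eqv G v v' ->
       exists g, G g /\ ((g u = u' /\ g v = v') \/ (g u = v' /\ g v = u')))
  /\ (forall l1 l2, KFace l1 -> KFace l2 -> ~ sameXFace G l1 l2 ->
       (forall x, ~ (inX G l1 x /\ inX G l2 x))
       \/ (exists a, forall x, inX G l1 x -> inX G l2 x -> eqv G x a)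
       \/ (exists a b, (forall x, inX G l1 x -> inX G l2 x -> eqv G x a \/ eqv G x b)
                       /\ edgeX_on G l1 a b /\ edgeX_on G l2 a b)).

(* X-face preservation for a lift phi : V(K) -> V(K) of a map V(X) -> V(X) *)
Definition face_presX (G : (KV -> KV) -> Prop) (phi : KV -> KV) : Prop :=
  forall l, KFace l -> exists l', KFace l' /\
    (Forall2 (eqv G) (map phi l) l' \/ Forall2 (eqv G) (map phi l) (rev l')).

Definition respects (G : (KV -> KV) -> Prop) (phi : KV -> KV) : Prop :=
  forall u v, eqv G u v -> eqv G (phi u) (phi v).

(* phi (a map on representatives) induces an automorphism of X = K/G *)
Definition is_autX (G : (KV -> KV) -> Prop) (phi : KV -> KV) : Prop :=
  respects G phi /\
  exists psi, respects G psi
    /\ (forall u, eqv G (psi (phi u)) u /\ eqv G (phi (psi u)) u)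
    /\ face_presX G phi /\ face_presX G psi.

(* A face-preserving map of K is determined by where it sends one hexagon centre and
   one corner of that hexagon, since the first two vertices of a face determine the
   face.  Hence an orientation-preserving automorphism sending centres to centres is
   a lattice translation composed with a rotation by a multiple of 60 degrees about a
   centre.  Elements of Gamma map centres to centres (a centre only lies on triangles,
   a corner also on squares), and a nontrivial rotation fixes a hexagon centre, an
   up/down triangle or a square, which freeness forbids; so Gamma consists of
   translations.  Every translation commutes with Gamma, and the half-turn inverts
   it, so both induce automorphisms of X.  Translations are transitive on centres and
   on each of the six corner classes, and the half-turn swaps corner k with k + 3,
   leaving four orbits. *)

From Stdlib Require Import ZArith List Lia.
Import ListNotations.
Open Scope Z_scope.

Lemma rot_length_le {A} (n : nat) (l : list A) : (length l <= n)%nat -> rot n l = l.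
Proof. intros H; unfold rot; rewrite skipn_all2, firstn_all2; auto. Qed.

Lemma rot_app {A} (a b : list A) : rot (length a) (a ++ b) = b ++ a.
Proof.
  unfold rot; rewrite skipn_app, firstn_app, skipn_all, firstn_all, Nat.sub_diag.
  now rewrite app_nil_r.
Qed.

Lemma rot_rot {A} (l : list A) k n : exists n', rot n (rot k l) = rot n' l.
Proof.
  destruct (Nat.le_gt_cases (length l) k) as [Hk|Hk].
  { exists n. now rewrite (rot_length_le k l Hk). }
  destruct (Nat.le_gt_cases (length l) n) as [Hn|Hn].
  { exists k. apply rot_length_le. unfold rot.
    rewrite length_app, length_skipn, length_firstn. lia. }
  assert (Ha : length (firstn k l) = k) by (apply firstn_length_le; lia).
  pose proof (firstn_skipn k l) as Hl.
  revert Ha Hl Hn; generalize (firstn k l) (skipn k l); intros a b <- <- Hn.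
  rewrite length_app in Hn.
  rewrite rot_app.
  destruct (Nat.le_gt_cases n (length b)) as [Hb|Hb].
  - exists (length a + n)%nat. unfold rot.
    rewrite !skipn_app, !firstn_app,
      (skipn_all2 (n := length a + n) a), (firstn_all2 (n := length a + n) a) by lia.
    replace (n - length b)%nat with 0%nat by lia.
    replace (length a + n - length a)%nat with n by lia.
    simpl. now rewrite app_nil_r, app_assoc.
  - exists (n - length b)%nat. unfold rot.
    rewrite !skipn_app, !firstn_app, (skipn_all2 (n := n) b), (firstn_all2 (n := n) b) by lia.
    replace (n - length b - length a)%nat with 0%nat by lia.
    simpl. now rewrite app_nil_r, app_assoc.
Qed.

Lemma map_rot {A B} (f : A -> B) n l : map f (rot n l) = rot n (map f l).
Proof. unfold rot; rewrite map_app, firstn_map, skipn_map; auto. Qed.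

Lemma in_rot {A} n (l : list A) x : In x (rot n l) <-> In x l.
Proof.
  unfold rot. rewrite in_app_iff. rewrite <- (firstn_skipn n l) at 3.
  rewrite in_app_iff. tauto.
Qed.

Ltac congr_lia := repeat (first [reflexivity | solve [lia] | f_equal]).

Lemma KFace_bd f : KFace (bd f).
Proof. exists f, 0%nat. destruct f; reflexivity. Qed.

Lemma KFace_rot l n : KFace l -> KFace (rot n l).
Proof.
  intros [f [k ->]]. destruct (rot_rot (bd f) k n) as [n' ->]. now exists f, n'.
Qed.

Lemma KFace_Cen_inv m n l :
  KFace (Cen m n :: l) -> exists j, l = [Bdy m n j; Bdy m n (nxt j)].
Proof.
  intros [f [k H]].
  destruct f; destruct k as [|[|[|[|k]]]];
    try rewrite rot_length_le in H by (simpl; lia);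
    simpl in H; inversion H; subst; eauto.
Qed.

Definition six_eq_dec (a b : six) : {a = b} + {a <> b}.
Proof. decide equality. Defined.

(* The remaining vertices of the face whose boundary begins with the edge [a b]. *)
Definition face_tail (a b : KV) : list KV :=
  match a, b with
  | Cen m n, Bdy _ _ k => [Bdy m n (nxt k)]
  | Bdy m n k, Cen _ _ => [Bdy m n (prv k)]
  | Bdy m n k, Bdy m' n' k' =>
      if (Z.eqb m m' && Z.eqb n n')%bool then
        if six_eq_dec k' (nxt k) then [Cen m n]
        else [bdv m n k (nxt (nxt (nxt k))); bdv m n k (nxt (nxt k))]
      else if six_eq_dec k' (nxt (nxt k)) then [bdv m n (nxt k) (nxt (nxt (nxt (nxt k))))]
      else [bdv m n (nxt k) (nxt (nxt (nxt k))); Bdy m n (nxt k)]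
  | _, _ => []
  end.

Lemma KFace_tail a b l : KFace (a :: b :: l) -> l = face_tail a b.
Proof.
  intros [f [k H]].
  destruct f as [m n j|m n j|m n|m n]; destruct k as [|[|[|[|k]]]];
    try rewrite rot_length_le in H by (simpl; lia);
    simpl in H; inversion H; subst; try destruct j; unfold bdv; simpl;
    repeat match goal with |- context [Z.eqb ?x ?y] =>
      destruct (Z.eqb_spec x y); try (exfalso; lia) end;
    unfold bdv; simpl; congr_lia.
Qed.

Definition face_map (s : KV -> KV) : Prop := forall l, KFace l -> KFace (map s l).

Lemma face_map_of_bd s :
  (forall f, exists f' k, map s (bd f) = rot k (bd f')) -> face_map s.
Proof.
  intros H l [f [n ->]]. rewrite map_rot. destruct (H f) as [f' [k ->]].
  apply KFace_rot, KFace_rot, KFace_bd.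
Qed.

Lemma face_map_ext s t : (forall x, s x = t x) -> face_map s -> face_map t.
Proof. intros E H l Hl. rewrite <- (map_ext _ _ E). auto. Qed.

Lemma face_map_id : face_map (fun x => x).
Proof. intros l H. now rewrite map_id. Qed.

Lemma face_map_comp s t : face_map s -> face_map t -> face_map (fun x => s (t x)).
Proof. intros Hs Ht l Hl. rewrite <- map_map. auto. Qed.

Definition transl (a b : Z) (x : KV) : KV :=
  match x with
  | Cen m n => Cen (m + a) (n + b)
  | Bdy m n k => Bdy (m + a) (n + b) k
  end.

(* [rot60] and [rot180] rotate about the hexagon centre [Cen 0 0]. *)
Definition rot60 (x : KV) : KV :=
  match x with
  | Cen m n => Cen (- n) (m + n)
  | Bdy m n k => Bdy (- n) (m + n) (nxt k)
  end.

Definition rot180 (x : KV) : KV :=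
  match x with
  | Cen m n => Cen (- m) (- n)
  | Bdy m n k => Bdy (- m) (- n) (nxt (nxt (nxt k)))
  end.

Definition turn (j : six) (x : KV) : KV :=
  match j with
  | S0 => x
  | S1 => rot60 x
  | S2 => rot60 (rot60 x)
  | S3 => rot60 (rot60 (rot60 x))
  | S4 => rot60 (rot60 (rot60 (rot60 x)))
  | S5 => rot60 (rot60 (rot60 (rot60 (rot60 x))))
  end.

Ltac map_bd :=
  cbn [map rot skipn firstn app bd]; unfold bdv;
  cbn [map transl rot60 rot180 turn dv fst snd nxt prv]; congr_lia.

Lemma face_map_transl a b : face_map (transl a b).
Proof.
  apply face_map_of_bd. intros [m n j|m n j|m n|m n].
  - exists (Tri (m + a) (n + b) j), 0%nat. map_bd.
  - exists (Sqr (m + a) (n + b) j), 0%nat. map_bd.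
  - exists (Up (m + a) (n + b)), 0%nat. map_bd.
  - exists (Dn (m + a) (n + b)), 0%nat. map_bd.
Qed.

Lemma face_map_rot60 : face_map rot60.
Proof.
  apply face_map_of_bd. intros [m n j|m n j|m n|m n].
  - exists (Tri (- n) (m + n) (nxt j)), 0%nat. map_bd.
  - exists (Sqr (- n) (m + n) (nxt j)), 0%nat. destruct j; map_bd.
  - exists (Dn (- n) (m + n)), 0%nat. map_bd.
  - exists (Up (- n - 1) (m + n)), 1%nat. map_bd.
Qed.

Lemma face_map_turn j : face_map (turn j).
Proof.
  destruct j; unfold turn;
    repeat first [apply face_map_id | apply face_map_rot60
                 | apply (face_map_comp rot60); [apply face_map_rot60|]].
Qed.

Lemma face_map_rot180 : face_map rot180.
Proof.
  apply (face_map_ext (turn S3)); [intros [m n|m n k]; simpl; congr_lia |].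
  apply face_map_turn.
Qed.

Definition point_reflection (a b : Z) (x : KV) : KV := transl a b (rot180 x).

Lemma face_map_point_reflection a b : face_map (point_reflection a b).
Proof. exact (face_map_comp _ _ (face_map_transl a b) face_map_rot180). Qed.

Section Rigidity.
Variables s1 s2 : KV -> KV.
Hypothesis s1_face : face_map s1.
Hypothesis s2_face : face_map s2.

Lemma agree_face_tail a b l : KFace (a :: b :: l) ->
  s1 a = s2 a -> s1 b = s2 b -> map s1 l = map s2 l.
Proof.
  intros H Ea Eb.
  rewrite (KFace_tail (s1 a) (s1 b) (map s1 l) (s1_face _ H)),
    (KFace_tail (s2 a) (s2 b) (map s2 l) (s2_face _ H)).
  now rewrite Ea, Eb.
Qed.

Definition agree_on_hexagon m n :=
  s1 (Cen m n) = s2 (Cen m n) /\ forall k, s1 (Bdy m n k) = s2 (Bdy m n k).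

Lemma agree_on_hexagon_of_corner m n k :
  s1 (Cen m n) = s2 (Cen m n) -> s1 (Bdy m n k) = s2 (Bdy m n k) ->
  agree_on_hexagon m n.
Proof.
  intros Ec Ek. split; [exact Ec|].
  assert (Hnxt : forall k, s1 (Bdy m n k) = s2 (Bdy m n k) ->
                           s1 (Bdy m n (nxt k)) = s2 (Bdy m n (nxt k))).
  { intros k' E. pose proof (agree_face_tail _ _ _ (KFace_bd (Tri m n k')) Ec E) as H.
    now injection H. }
  pose proof (Hnxt _ Ek) as E1. pose proof (Hnxt _ E1) as E2.
  pose proof (Hnxt _ E2) as E3. pose proof (Hnxt _ E3) as E4.
  pose proof (Hnxt _ E4) as E5.
  intros k'; destruct k, k'; assumption.
Qed.

(* Across the square on edge [j] of a hexagon, and then along a triangle of the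
   neighbouring hexagon, the agreement reaches the neighbouring centre. *)
Lemma agree_on_hexagon_neighbour m n j :
  agree_on_hexagon m n -> agree_on_hexagon (m + fst (dv j)) (n + snd (dv j)).
Proof.
  intros [_ E].
  pose proof (agree_face_tail _ _ _ (KFace_bd (Sqr m n j)) (E _) (E _)) as H.
  simpl in H. unfold bdv in H. injection H as Ha Hb.
  assert (HT : KFace (rot 1 (bd (Tri (m + fst (dv j)) (n + snd (dv j)) (nxt (nxt j))))))
    by apply KFace_rot, KFace_bd.
  unfold rot in HT; simpl in HT.
  pose proof (agree_face_tail _ _ _ HT Hb Ha) as H'. simpl in H'. injection H' as Hc.
  exact (agree_on_hexagon_of_corner _ _ _ Hc Hb).
Qed.

Lemma agree_on_hexagon_all : agree_on_hexagon 0 0 -> forall m n, agree_on_hexagon m n.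
Proof.
  intros H0.
  assert (Hstep : forall m n j, agree_on_hexagon m n -> forall m' n',
             m' = m + fst (dv j) -> n' = n + snd (dv j) -> agree_on_hexagon m' n')
    by (intros m n j H m' n' -> ->; now apply agree_on_hexagon_neighbour).
  assert (Hrow : forall m, agree_on_hexagon m 0).
  { apply Z.peano_ind; [exact H0| |];
      intros m Hm; [apply (Hstep _ _ S0 Hm) | apply (Hstep _ _ S3 Hm)]; simpl; lia. }
  intros m. apply Z.peano_ind; [apply Hrow| |];
    intros n Hn; [apply (Hstep _ _ S1 Hn) | apply (Hstep _ _ S4 Hn)]; simpl; lia.
Qed.

Lemma face_map_rigidity :
  s1 (Cen 0 0) = s2 (Cen 0 0) -> s1 (Bdy 0 0 S0) = s2 (Bdy 0 0 S0) ->
  forall x, s1 x = s2 x.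
Proof.
  intros Ec Ek [m n|m n k];
    destruct (agree_on_hexagon_all (agree_on_hexagon_of_corner _ _ _ Ec Ek) m n); auto.
Qed.

End Rigidity.

Lemma face_map_to_Cen_is_turn s a b :
  face_map s -> s (Cen 0 0) = Cen a b ->
  exists j, forall x, s x = transl a b (turn j x).
Proof.
  intros Hs E.
  pose proof (Hs _ (KFace_bd (Tri 0 0 S0))) as H. simpl in H. rewrite E in H.
  destruct (KFace_Cen_inv _ _ _ H) as [j Hj]. injection Hj as Hb _.
  exists j. apply face_map_rigidity; [exact Hs | |rewrite E|rewrite Hb];
    [apply face_map_comp; [apply face_map_transl | apply face_map_turn]
    | destruct j; simpl; congr_lia ..].
Qed.

Definition fixes_vertex_or_face (s : KV -> KV) : Prop :=
  (exists v, s v = v) \/ (exists l, KFace l /\ forall x, In x (map s l) <-> In x l).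

Lemma fixes_Cen s m n : s (Cen m n) = Cen m n -> fixes_vertex_or_face s.
Proof. left; eauto. Qed.

Lemma fixes_face s f k : map s (bd f) = rot k (bd f) -> fixes_vertex_or_face s.
Proof.
  intros H. right. exists (bd f). split; [apply KFace_bd|].
  intros x. rewrite H. apply in_rot.
Qed.

Lemma Z_mod3_cases a : exists p, a = 3 * p \/ a = 3 * p + 1 \/ a = 3 * p + 2.
Proof. exists (a / 3). pose proof (Z.div_mod a 3). pose proof (Z.mod_pos_bound a 3). lia. Qed.

(* A rotation of the plane by 60, 120 or 180 degrees fixes a point; here that point
   is a hexagon centre, the centre of an [Up]/[Dn] triangle, or a square centre. *)
Lemma turn_fixes_vertex_or_face a b j :
  j <> S0 -> fixes_vertex_or_face (fun x => transl a b (turn j x)).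
Proof.
  intros Hj. destruct j; [easy| | | | |].
  - apply (fixes_Cen _ (- b) (a + b)). map_bd.
  - destruct (Z_mod3_cases (a - b)) as [t [Ht|[Ht|Ht]]].
    + apply (fixes_Cen _ t (t + b)). map_bd.
    + replace a with (b + 3 * t + 1) by lia. apply (fixes_face _ (Up t (t + b)) 1). map_bd.
    + replace a with (b + 3 * t + 2) by lia. apply (fixes_face _ (Dn (t + 1) (t + b)) 1). map_bd.
  - destruct (Z.Even_or_Odd a) as [[p ->]|[p ->]], (Z.Even_or_Odd b) as [[q ->]|[q ->]].
    + apply (fixes_Cen _ p q). map_bd.
    + apply (fixes_face _ (Sqr p q S1) 2). map_bd.
    + apply (fixes_face _ (Sqr p q S0) 2). map_bd.
    + apply (fixes_face _ (Sqr (p + 1) q S2) 2). map_bd.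
  - destruct (Z_mod3_cases (b - a)) as [t [Ht|[Ht|Ht]]].
    + apply (fixes_Cen _ (t + a) t). map_bd.
    + replace b with (a + 3 * t + 1) by lia. apply (fixes_face _ (Up (t + a) t) 2). map_bd.
    + replace b with (a + 3 * t + 2) by lia. apply (fixes_face _ (Dn (t + a + 1) t) 2). map_bd.
  - apply (fixes_Cen _ (a + b) (- a)). map_bd.
Qed.

Section QuotientAutomorphisms.
Variable G : (KV -> KV) -> Prop.
Hypothesis G_has_id : exists e, G e /\ forall x, e x = x.

Lemma eqv_of_eq x y : x = y -> eqv G x y.
Proof. intros ->. destruct G_has_id as [e [He Hid]]. exists e; auto. Qed.

Lemma Forall2_eqv_refl l : Forall2 (eqv G) l l.
Proof. induction l; constructor; auto using eqv_of_eq. Qed.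

Lemma is_autX_of_face_map_bijection phi psi :
  respects G phi -> respects G psi -> face_map phi -> face_map psi ->
  (forall u, psi (phi u) = u /\ phi (psi u) = u) -> is_autX G phi.
Proof.
  intros Rphi Rpsi Fphi Fpsi Inv. split; [exact Rphi|]. exists psi.
  split; [exact Rpsi|]. split; [|split].
  - intros u. destruct (Inv u). split; apply eqv_of_eq; assumption.
  - intros l Hl. exists (map phi l). split; auto using Forall2_eqv_refl.
  - intros l Hl. exists (map psi l). split; auto using Forall2_eqv_refl.
Qed.

End QuotientAutomorphisms.

Section TranslationGroup.
Variable G : (KV -> KV) -> Prop.
Hypothesis G_subgroup : subgroup_autK G.
Hypothesis G_free : acts_freely G.
Hypothesis G_torus : quotient_is_torus G.

Lemma G_face_map g : G g -> face_map g.
Proof. intros Hg l Hl. exact (proj2 G_torus g Hg l Hl). Qed.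

(* A square through [g (Cen 0 0)] would be mapped by [g^-1] to a face through a
   centre, and faces through a centre are triangles. *)
Lemma G_maps_Cen_to_Cen g : G g -> exists a b, g (Cen 0 0) = Cen a b.
Proof.
  intros Hg. destruct G_subgroup as [_ [_ [_ G_inv]]].
  destruct (G_inv g Hg) as [h [Hh Hhg]].
  destruct (g (Cen 0 0)) as [a b|p q k] eqn:E; [eauto|exfalso].
  pose proof (G_face_map h Hh _ (KFace_bd (Sqr p q k))) as H.
  simpl in H. rewrite <- E, (proj1 (Hhg _)) in H.
  destruct (KFace_Cen_inv _ _ _ H) as [j Hj]. discriminate Hj.
Qed.

Lemma G_is_translation g : G g -> exists a b, forall x, g x = transl a b x.
Proof.
  intros Hg. destruct (G_maps_Cen_to_Cen g Hg) as [a [b E]].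
  destruct (face_map_to_Cen_is_turn g a b (G_face_map g Hg) E) as [j Eg].
  exists a, b. destruct (six_eq_dec j S0) as [->|Hj]; [exact Eg|exfalso].
  assert (Hid : forall x, g x = x).
  { apply (G_free g Hg).
    destruct (turn_fixes_vertex_or_face a b j Hj) as [[v Hv]|[l [Hl Hs]]].
    - left. exists v. now rewrite Eg.
    - right; right. exists l. split; [exact Hl|]. intros x.
      now rewrite (map_ext _ _ Eg). }
  pose proof (Hid (Bdy 0 0 S0)) as H. rewrite Eg in H.
  destruct j; cbn in H; congruence.
Qed.

Lemma respects_transl a b : respects G (transl a b).
Proof.
  intros u v [g [Hg <-]]. destruct (G_is_translation g Hg) as [c [d Eg]].
  exists g. split; [exact Hg|]. rewrite !Eg. destruct u; cbn; congr_lia.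
Qed.

(* The point reflection conjugates a translation of [G] into its inverse, which lies in [G]. *)
Lemma respects_point_reflection a b : respects G (point_reflection a b).
Proof.
  intros u v [g [Hg <-]]. destruct (G_is_translation g Hg) as [c [d Eg]].
  destruct G_subgroup as [_ [_ [_ G_inv]]].
  destruct (G_inv g Hg) as [h [Hh Hhg]].
  destruct (G_is_translation h Hh) as [e [f Eh]].
  pose proof (proj1 (Hhg (Cen 0 0))) as H0. rewrite Eg, Eh in H0.
  cbn in H0. injection H0 as He Hf.
  exists h. split; [exact Hh|]. rewrite Eh, Eg.
  unfold point_reflection. destruct u; cbn; congr_lia.
Qed.

Lemma is_autX_transl a b : is_autX G (transl a b).
Proof.
  apply (is_autX_of_face_map_bijection G (proj1 (proj2 G_subgroup)) _ (transl (- a) (- b)));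
    auto using respects_transl, face_map_transl.
  intros [m n|m n k]; cbn; split; congr_lia.
Qed.

Lemma is_autX_point_reflection a b : is_autX G (point_reflection a b).
Proof.
  apply (is_autX_of_face_map_bijection G (proj1 (proj2 G_subgroup)) _ (point_reflection a b));
    auto using respects_point_reflection, face_map_point_reflection.
  intros [m n|m n k]; unfold point_reflection; cbn; [|destruct k]; cbn; split; congr_lia.
Qed.

End TranslationGroup.

Lemma vertex_image_of_rep u :
  exists r, In r [Cen 0 0; Bdy 0 0 S0; Bdy 0 0 S1; Bdy 0 0 S2] /\
    ((exists a b, transl a b r = u) \/ (exists a b, point_reflection a b r = u)).
Proof.
  destruct u as [m n|m n k].
  - exists (Cen 0 0). split; [cbn; tauto|]. left; exists m, n; cbn; congr_lia.
  - destruct k;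
      [exists (Bdy 0 0 S0) | exists (Bdy 0 0 S1) | exists (Bdy 0 0 S2)
      | exists (Bdy 0 0 S0) | exists (Bdy 0 0 S1) | exists (Bdy 0 0 S2)];
      (split; [cbn; tauto|]); [left | left | left | right | right | right];
      exists m, n; cbn; congr_lia.
Qed.

Theorem theorem1 (G : (KV -> KV) -> Prop) :
  subgroup_autK G -> acts_freely G -> quotient_is_torus G ->
  polyhedral_quotient G ->
  exists reps : list KV, (length reps <= 4)%nat /\
    forall u : KV, exists r phi, In r reps /\ is_autX G phi /\ eqv G (phi r) u.
Proof.
  intros HS HF HT _.
  exists [Cen 0 0; Bdy 0 0 S0; Bdy 0 0 S1; Bdy 0 0 S2]. split; [cbn; lia|].
  intros u. destruct (vertex_image_of_rep u) as [r [Hr [[a [b E]]|[a [b E]]]]].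
  - exists r, (transl a b). split; [exact Hr|]. split.
    + now apply is_autX_transl.
    + apply eqv_of_eq; [exact (proj1 (proj2 HS)) | exact E].
  - exists r, (point_reflection a b). split; [exact Hr|]. split.
    + now apply is_autX_point_reflection.
    + apply eqv_of_eq; [exact (proj1 (proj2 HS)) | exact E].
Qed.
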